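(* Let $C(n)$ be the number of distinct nonempty words $\omega$ such that $\omega\omega\omega$ is a factor of $\mathbb{T}[1,n]$. Then $C(t_m)=0$ for $m\leq6$, and for $m\geq7$, $C(t_m)=\frac{t_{m-5}+t_{m-6}-m+3}{2}$.
   Context: The Tribonacci sequence $\mathbb{T}=x_1x_2x_3\cdots$ is the fixed point (infinite word starting with $a$) of the substitution $\sigma(a)=ab$, $\sigma(b)=ac$, $\sigma(c)=a$ over $\{a,b,c\}$. For $n\ge1$, $\mathbb{T}[1,n]=x_1\cdots x_n$ is its prefix of length $n$. The Tribonacci numbers are $t_m=|\sigma^m(a)|$ for $m\ge0$, with $t_{-2}=0$, $t_{-1}=1$; thus $t_0=1,t_1=2,t_2=4$ and $t_m=t_{m-1}+t_{m-2}+t_{m-3}$. *)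

From mathcomp Require Import all_boot all_order all_algebra.
Set Implicit Arguments. Unset Strict Implicit. Unset Printing Implicit Defensive.

Definition la : nat := 0.
Definition lb : nat := 1.
Definition lc : nat := 2.

Definition sigma_letter (x : nat) : seq nat :=
  if x == la then [:: la; lb]
  else if x == lb then [:: la; lc]
  else if x == lc then [:: la]
  else [::].

Definition sigma (w : seq nat) : seq nat := flatten (map sigma_letter w).

Definition sigma_pow_a (m : nat) : seq nat := iter m sigma [:: la].

Definition trib (m : nat) : nat := size (sigma_pow_a m).

(* The letter x_{i+1} of the fixed point T = x_1 x_2 x_3 ...:
   sigma^{i+1}(a) is a prefix of T of length >= i+1. *)
Definition Tx (i : nat) : nat := nth la (sigma_pow_a i.+1) i.

Definition Tprefix (n : nat) : seq nat := [seq Tx i | i <- iota 0 n].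

Definition factors (u : seq nat) : seq (seq nat) :=
  [seq take l (drop i u) | i <- iota 0 (size u), l <- iota 0 (size u).+1].

(* Any such w is itself a factor of T[1,n], so enumerating the
   factors of T[1,n] and removing duplicates counts them all exactly once. *)
Definition cube_count (n : nat) : nat :=
  let p := Tprefix n in
  size (undup [seq w <- factors p | (w != [::]) && infix (w ++ w ++ w) p]).

From mathcomp Require Import all_boot all_order all_algebra zify.
Set Implicit Arguments. Unset Strict Implicit. Unset Printing Implicit Defensive.

(* Write T = x_1 x_2 ... and pos n = |sigma(x_1 ... x_n)|, so that sigma(x_(n+1)) starts
   at position pos n of T (positions counted from 0).  Every a of T starts such a block
   and the letter following it determines x_(n+1).  Hence a factor of T with period
   p >= 2 and length >= 3p - 1 that cannot be extended to the left desubstitutes into a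
   factor with the same properties and a period p' < p, where p = |sigma(T[n+1, n+p'])|.
   Descending to period 1, where the only such factor is aa, shows that the factor is a
   prefix of the occurrence at position t_(k+3) - t_k of the word X_k (X_0 = aa,
   X_(k+1) = sigma(X_k) a), and that p = t_k.

   Consequently the cubes w w w in sigma^m(a) are exactly those where w is the factor of
   length t_k of X_k starting at some j <= |X_k| - 3 t_k, for 3 <= k <= m - 4.  These
   words are pairwise distinct since X_k has no shorter period, and summing
   |X_k| - 3 t_k + 1 with the recurrence |X_(k+4)| + |X_k| = 2 |X_(k+3)| gives the
   formula. *)

Local Notation A := sigma_pow_a.
Local Notation t := trib.
Local Notation T := Tx.

(** * Tribonacci words and numbers *)

Lemma sigma_cat u v : sigma (u ++ v) = sigma u ++ sigma v.
Proof. by rewrite /sigma map_cat flatten_cat. Qed.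

Lemma sigma1 x : sigma [:: x] = sigma_letter x.
Proof. exact: cats0. Qed.

Lemma sigma_pow_aS m : A m.+1 = sigma (A m).
Proof. exact: iterS. Qed.

Lemma sigma_pow_a_rec m : A m.+3 = A m.+2 ++ A m.+1 ++ A m.
Proof.
elim: m => [//|m IHm].
by rewrite [A m.+4]sigma_pow_aS [in sigma (A m.+3)]IHm !sigma_cat -!sigma_pow_aS.
Qed.

Lemma trib_rec m : t m.+3 = t m.+2 + t m.+1 + t m.
Proof. by rewrite /trib sigma_pow_a_rec !size_cat addnA. Qed.

Lemma trib_gt0 m : 0 < t m.
Proof.
elim/ltn_ind: m => -[|[|[|m]]] // IHm.
by rewrite trib_rec; apply/ltn_addl/IHm; lia.
Qed.

Lemma trib_ltS m : t m < t m.+1.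
Proof. by case: m => [|[|m]] //; rewrite trib_rec; have := trib_gt0 m; lia. Qed.

Lemma leq_trib2 : {mono trib : m n / m <= n}.
Proof. by apply: Order.NatMonotonyTheory.incnP; apply: trib_ltS. Qed.

Lemma ltn_trib2 : {mono trib : m n / m < n}.
Proof. exact: leqW_mono leq_trib2. Qed.

Lemma ltn_trib m : m < t m.
Proof. by elim: m => // m IHm; apply: leq_ltn_trans (trib_ltS m). Qed.

Lemma take_sigma_pow_aS m : take (t m) (A m.+1) = A m.
Proof. by case: m => [|[|m]] //; rewrite sigma_pow_a_rec take_size_cat. Qed.

Lemma take_sigma_pow_a m M : m <= M -> take (t m) (A M) = A m.
Proof.
move/subnK <-; elim: (M - m) => [|d IHd]; first by rewrite take_size.
by rewrite -IHd -[A (d + m)]take_sigma_pow_aS take_takel // leq_trib2 leq_addl.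
Qed.

Lemma Tx_sigma_pow_a m i : i < t m -> T i = nth 0 (A m) i.
Proof.
move=> lt_i; rewrite /Tx; case: (leqP i.+1 m) => [le_im | /ltnW le_mi].
  by rewrite -(take_sigma_pow_a le_im) nth_take //; apply: ltnW (ltn_trib _).
by rewrite -(take_sigma_pow_a le_mi) nth_take.
Qed.

Lemma Tprefix_take n M : n <= t M -> Tprefix n = take n (A M).
Proof.
move=> le_n; apply: (@eq_from_nth _ 0) => [|i].
  by rewrite size_map size_iota size_takel.
rewrite size_map size_iota => lt_i.
rewrite (nth_map 0) ?size_iota // nth_iota // add0n nth_take //.
by apply: Tx_sigma_pow_a; apply: leq_trans le_n.
Qed.

Lemma Tprefix_trib m : Tprefix (t m) = A m.
Proof. by rewrite (@Tprefix_take _ m) // take_size. Qed.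

Local Notation ternary w := (all (fun x : nat => x < 3) w).

Lemma ternary_sigma w : ternary (sigma w).
Proof.
elim: w => // x w IHw; rewrite /sigma /= all_cat; apply/andP; split => //.
by rewrite /sigma_letter; case: ifP => //; case: ifP => //; case: ifP.
Qed.

Lemma Tx_cases i : [\/ T i = 0, T i = 1 | T i = 2].
Proof.
have: T i < 3.
  rewrite /Tx sigma_pow_aS; apply: (allP (ternary_sigma _)); apply: mem_nth.
  by rewrite -sigma_pow_aS; apply: ltnW (ltn_trib _).
by case: (T i) => [|[|[|]]]; constructor.
Qed.

(* T[i+1, i+l] *)
Definition Tfactor i l := map T (iota i l).

Lemma TprefixE n : Tprefix n = Tfactor 0 n.
Proof. by []. Qed.

Lemma Tfactor_cat i l1 l2 : Tfactor i (l1 + l2) = Tfactor i l1 ++ Tfactor (i + l1) l2.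
Proof. by rewrite /Tfactor iotaD map_cat. Qed.

Lemma size_Tfactor i l : size (Tfactor i l) = l.
Proof. by rewrite size_map size_iota. Qed.

Lemma nth_Tfactor i l j : j < l -> nth 0 (Tfactor i l) j = T (i + j).
Proof. by move=> lt_j; rewrite (nth_map 0) ?size_iota // nth_iota. Qed.

Lemma take_Tfactor i a b : a <= b -> take a (Tfactor i b) = Tfactor i a.
Proof. by move=> le_ab; rewrite /Tfactor -map_take take_iota (minn_idPl le_ab). Qed.

Lemma take_drop_Tfactor i l a b : a + b <= l ->
  take b (drop a (Tfactor i l)) = Tfactor (i + a) b.
Proof.
move=> le_abl; rewrite /Tfactor -map_drop -map_take drop_iota take_iota.
by rewrite (minn_idPl _) //; lia.
Qed.

(** * Desubstitution *)

Definition pos n := size (sigma (Tprefix n)).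

Lemma Tprefix_pos n : Tprefix (pos n) = sigma (Tprefix n).
Proof.
have le_n : n <= t n by apply: ltnW (ltn_trib n).
have sigmaA : A n.+1 = sigma (take n (A n)) ++ sigma (drop n (A n)).
  by rewrite -sigma_cat cat_take_drop sigma_pow_aS.
have le_pos : pos n <= t n.+1.
  by rewrite /pos /trib sigmaA (Tprefix_take le_n) size_cat leq_addr.
by rewrite (Tprefix_take le_pos) /pos (Tprefix_take le_n) sigmaA take_size_cat.
Qed.

Lemma pos_addn n l : pos (n + l) = pos n + size (sigma (Tfactor n l)).
Proof. by rewrite /pos !TprefixE Tfactor_cat sigma_cat size_cat. Qed.

Lemma Tfactor_sigma n l :
  Tfactor (pos n) (size (sigma (Tfactor n l))) = sigma (Tfactor n l).
Proof.
have := congr1 (drop (pos n)) (Tprefix_pos (n + l)).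
rewrite pos_addn TprefixE Tfactor_cat -TprefixE drop_size_cat ?size_Tfactor // => ->.
by rewrite TprefixE Tfactor_cat sigma_cat -TprefixE drop_size_cat.
Qed.

Lemma posS n : pos n.+1 = pos n + size (sigma_letter (T n)).
Proof. by rewrite -addn1 pos_addn sigma1. Qed.

Lemma Tfactor_pos n : Tfactor (pos n) (size (sigma_letter (T n))) = sigma_letter (T n).
Proof. by rewrite -sigma1 (Tfactor_sigma n 1). Qed.

Lemma Tx_pos n : T (pos n) = 0.
Proof. by have := Tfactor_pos n; case: (Tx_cases n) => -> /= [->]. Qed.

Lemma posS_c n : T n = 2 -> pos n.+1 = (pos n).+1.
Proof. by move=> Tn; rewrite posS Tn addn1. Qed.

Lemma posS_ab n : T n <> 2 -> pos n.+1 = (pos n).+2 /\ T (pos n).+1 = (T n).+1.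
Proof.
have := Tfactor_pos n; rewrite posS.
by case: (Tx_cases n) => -> //= [_ ->]; rewrite addn2.
Qed.

Lemma pos_ltS n : pos n < pos n.+1 <= (pos n).+2.
Proof. by case: (eqVneq (T n) 2) => [/posS_c -> | /eqP /posS_ab [-> _]]; lia. Qed.

Lemma leq_pos2 : {mono pos : m n / m <= n}.
Proof. by apply: Order.NatMonotonyTheory.incnP => n; case/andP: (pos_ltS n). Qed.

Lemma ltn_pos2 : {mono pos : m n / m < n}.
Proof. exact: leqW_mono leq_pos2. Qed.

Lemma leq_pos_addn n l : pos n + l <= pos (n + l).
Proof.
elim: l => [|l IHl]; first by rewrite !addn0.
by rewrite !addnS; case/andP: (pos_ltS (n + l)) => lt_l _; lia.
Qed.

Lemma pos_cases j : exists n, j = pos n \/ j = (pos n).+1 /\ T n <> 2.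
Proof.
have [n /andP[le_nj lt_jn]] : exists n, pos n <= j < pos n.+1.
  elim: j => [|j [n /andP[le_nj lt_jn]]]; first by exists 0.
  case: (ltnP j.+1 (pos n.+1)) => [lt_jn1|le_nj1]; first by exists n; lia.
  by exists n.+1; case/andP: (pos_ltS n.+1) => lt_n1 _; lia.
exists n; case: (eqVneq (T n) 2) => [/posS_c | /eqP T_n]; first by lia.
by case: (posS_ab T_n) lt_jn => -> _; lia.
Qed.

Lemma Tx_pos_succ n : T (pos n).+1 = (T n).+1 %% 3.
Proof.
case: (eqVneq (T n) 2) => [T_n | /eqP T_n]; first by rewrite -posS_c // Tx_pos T_n.
by have [_ ->] := posS_ab T_n; case: (Tx_cases n) T_n => ->.
Qed.

Lemma Tx_posS_pred n : T (pos n.+1).-1 = (T n).+1 %% 3.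
Proof.
case: (eqVneq (T n) 2) => [T_n | /eqP T_n]; first by rewrite posS_c // Tx_pos T_n.
by have [-> _] := posS_ab T_n; rewrite /= Tx_pos_succ.
Qed.

Lemma Tx_succ_mod3_inj m n : (T m).+1 %% 3 = (T n).+1 %% 3 -> T m = T n.
Proof. by case: (Tx_cases m) (Tx_cases n) => -> [] ->. Qed.

Lemma Tx_eq0_pos j : T j = 0 -> exists n, j = pos n.
Proof.
have [n [-> | [-> T_n]]] := pos_cases j; first by exists n.
by rewrite Tx_pos_succ; case: (Tx_cases n) T_n => ->.
Qed.

Lemma Tx_neq0_pos j : T j <> 0 -> exists2 n, j = (pos n).+1 & T n <> 2.
Proof. by have [n [-> | [-> T_n]]] := pos_cases j; [rewrite Tx_pos | exists n]. Qed.

Lemma Tx_c_next j : T j = 2 -> T j.+1 = 0.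
Proof.
move=> T_j; have [|n -> T_n] := @Tx_neq0_pos j; first by rewrite T_j.
by have [<- _] := posS_ab T_n; rewrite Tx_pos.
Qed.

Lemma pos_addn2 n : (pos n).+3 <= pos n.+2.
Proof.
case/andP: (pos_ltS n.+1) => lt_n1 _.
case: (eqVneq (T n) 2) => [T_n | /eqP /posS_ab [e _]]; last by rewrite e in lt_n1.
have /posS_ab [-> _] : T n.+1 <> 2 by rewrite (Tx_c_next T_n).
by rewrite posS_c.
Qed.

(** * The words X_k *)

Fixpoint X k := if k is k'.+1 then sigma (X k') ++ [:: 0] else [:: 0; 0].

Definition Xpos k := t k.+3 - t k.

Lemma ternary_X k : ternary (X k).
Proof. by case: k => // k; rewrite /= all_cat ternary_sigma. Qed.

Lemma X_cat k : X k = A k ++ drop (t k) (X k).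
Proof.
elim: k => // k IHk; move: IHk; set d := drop _ (X k) => /= e.
by rewrite e sigma_cat -sigma_pow_aS -catA drop_size_cat.
Qed.

Lemma trib_le_size_X k : t k <= size (X k).
Proof. by rewrite X_cat size_cat leq_addr. Qed.

Lemma take_X k : take (t k) (X k) = A k.
Proof. by rewrite X_cat take_size_cat. Qed.

Lemma sigma_cons0 w : w != [::] -> ternary w -> exists r, sigma w = 0 :: r.
Proof.
case: w => // x w _ /andP[lt_x _]; rewrite /sigma /= /sigma_letter.
by case: x lt_x => [|[|[|]]] //= _; eexists.
Qed.

Lemma X_period k : take (size (X k) - t k) (X k) = drop (t k) (X k).
Proof.
elim: k => // k IHk.
set v := drop (t k) (X k); set w := drop (size (X k) - t k) (X k).
have Xv : X k = A k ++ v by exact: X_cat.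
have Xw : X k = v ++ w by rewrite /w /v -IHk cat_take_drop.
have size_w : size w = t k by rewrite /w size_drop; have := trib_le_size_X k; lia.
have [r sigma_w] : exists r, sigma w = 0 :: r.
  apply: sigma_cons0; first by rewrite -size_eq0 size_w -lt0n trib_gt0.
  by have := ternary_X k; rewrite Xw all_cat => /andP[].
have XSv : X k.+1 = sigma (A k) ++ sigma v ++ [:: 0] by rewrite /= Xv sigma_cat catA.
have XSw : X k.+1 = sigma v ++ sigma w ++ [:: 0] by rewrite /= Xw sigma_cat catA.
have size_sigmaA : size (sigma (A k)) = t k.+1 by rewrite /trib sigma_pow_aS.
have -> : size (X k.+1) - t k.+1 = (size (sigma v)).+1.
  have := congr1 size (etrans (esym XSv) XSw); rewrite XSw !size_cat /=; lia.
rewrite {2}XSv -size_sigmaA drop_size_cat // XSw -addn1 takeD take_size_cat //.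
by rewrite drop_size_cat // sigma_w /= take0.
Qed.

Lemma nth_X_period k n : n + t k < size (X k) -> nth 0 (X k) n = nth 0 (X k) (n + t k).
Proof.
move=> lt_n; rewrite -[in LHS](nth_take _ (_ : n < size (X k) - t k)); last by lia.
by rewrite X_period nth_drop addnC.
Qed.

Lemma Xpos_pos k : pos (Xpos k) = Xpos k.+1.
Proof.
have e : Xpos k = t k.+2 + t k.+1 by rewrite /Xpos trib_rec; lia.
have le_Xpos : Xpos k <= t k.+3 by rewrite e trib_rec leq_addr.
rewrite /pos (Tprefix_take le_Xpos) sigma_pow_a_rec catA e take_size_cat ?size_cat //.
by rewrite sigma_cat -!sigma_pow_aS size_cat /Xpos [t k.+4]trib_rec /trib; lia.
Qed.

Lemma Tfactor_X k : Tfactor (Xpos k) (size (X k)) = X k.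
Proof.
elim: k => [|k IHk]; first by vm_compute.
have := Tfactor_sigma (Xpos k) (size (X k)); rewrite IHk Xpos_pos => Tsigma.
rewrite /= size_cat Tfactor_cat Tsigma; congr (_ ++ _).
by rewrite /Tfactor /= -Xpos_pos -{1}IHk -pos_addn Tx_pos.
Qed.

Lemma count_sigma w : ternary w ->
  [/\ count_mem 0 (sigma w) = size w, count_mem 1 (sigma w) = count_mem 0 w
    & count_mem 2 (sigma w) = count_mem 1 w].
Proof.
elim: w => // x w IHw /andP[lt_x /IHw[c0 c1 c2]].
rewrite /sigma /= !count_cat -/(sigma w) c0 c1 c2.
by case: x lt_x => [|[|[|]]] //= _; split; lia.
Qed.

Lemma size_sigma w : ternary w -> size (sigma w) + count_mem 2 w = 2 * size w.
Proof.
elim: w => // x w IHw /andP[lt_x /IHw]; rewrite /sigma /= size_cat -/(sigma w).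
by case: x lt_x => [|[|[|]]] //= _; lia.
Qed.

Lemma count_X k :
  [/\ count_mem 0 (X k.+1) = (size (X k)).+1, count_mem 1 (X k.+1) = count_mem 0 (X k)
    & count_mem 2 (X k.+1) = count_mem 1 (X k)].
Proof.
have [c0 c1 c2] := count_sigma (ternary_X k).
by rewrite /= !count_cat c0 c1 c2 /=; split; lia.
Qed.

Lemma size_X_rec k : size (X k.+4) + size (X k) = 2 * size (X k.+3).
Proof.
have c2 : count_mem 2 (X k.+3) = (size (X k)).+1.
  by case: (count_X k.+2) (count_X k.+1) (count_X k) => _ _ -> [_ -> _] [-> _ _].
have := size_sigma (ternary_X k.+3); rewrite c2 [X k.+4]/= size_cat /=; lia.
Qed.

Lemma size_X_trib k : 2 * size (X k.+3) + 3 + t k = 6 * t k.+3 + t k.+2.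
Proof.
pose P j := 2 * size (X j.+3) + 3 + t j = 6 * t j.+3 + t j.+2.
suff : [/\ P k, P k.+1, P k.+2 & P k.+3] by case.
elim: k => [|k [P0 P1 P2 P3]]; first by vm_compute.
split => //; move: P0 P3; rewrite /P.
have := size_X_rec k.+3; have := trib_rec k; have := trib_rec k.+1.
have := trib_rec k.+2; have := trib_rec k.+3; have := trib_rec k.+4; lia.
Qed.

Lemma size_X_small k : k <= 2 -> (size (X k)).+1 = 3 * t k.
Proof. by case: k => [|[|[|]]] //; vm_compute. Qed.

Lemma size_X_bounds k : 3 <= k ->
  [/\ 3 * t k <= size (X k), size (X k) < 4 * t k & Xpos k + size (X k) <= t k.+4].
Proof.
move=> le3k; have -> : k = (k - 3).+3 by lia.
set j := k - 3; have := size_X_trib j.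
have : t j + 3 <= t j.+2.
  case: j => // j; rewrite trib_rec.
  by have := trib_ltS j; have := trib_ltS j.+1; have := trib_gt0 j; lia.
have := trib_ltS j; have := trib_ltS j.+1; have := trib_ltS j.+2.
have := trib_rec j.+1; have := trib_rec j.+2; have := trib_rec j.+3; have := trib_rec j.+4.
by rewrite /Xpos; split; lia.
Qed.

Lemma size_X_ltS k : size (X k) < size (X k.+1).
Proof.
rewrite /= size_cat addn1 ltnS.
have : count_mem 2 (X k) <= size (X k) := count_size _ _.
have := size_sigma (ternary_X k); lia.
Qed.

Lemma leq_size_X2 : {mono (fun k => size (X k)) : m n / m <= n}.
Proof. by apply: Order.NatMonotonyTheory.incnP; apply: size_X_ltS. Qed.

Lemma take_X_succ k j :
  take (size (sigma (take j (X k)))).+1 (X k.+1) = sigma (take j (X k)) ++ [:: 0].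
Proof.
have -> : X k.+1 = sigma (take j (X k)) ++ sigma (drop j (X k)) ++ [:: 0].
  by rewrite /= catA -sigma_cat cat_take_drop.
rewrite -addn1 takeD take_size_cat // drop_size_cat //; congr (_ ++ _).
case: (eqVneq (drop j (X k)) [::]) => [-> // | d_neq0].
have [|r -> /=] := sigma_cons0 d_neq0; last by rewrite take0.
by apply/allP => x /mem_drop; apply: (allP (ternary_X k)).
Qed.

(** * Periodic factors of T *)

Definition has_period i l p := forall j, i <= j -> j + p < i + l -> T j = T (j + p).

Definition left_maximal i p := i = 0 \/ T i.-1 <> T (i.-1 + p).

Lemma has_period_extend_left i l p : has_period i l p ->
  exists2 i0, i0 <= i & left_maximal i0 p /\ has_period i0 (l + (i - i0)) p.
Proof.
elim: i l => [|i IHi] l per_i; first by exists 0 => //; split; [left | rewrite addn0].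
case: (eqVneq (T i) (T (i + p))) => [eqTi | neqTi]; last first.
  by exists i.+1 => //; split; [right => /= /eqP; apply/negP | rewrite subnn addn0].
have [|i0 le_i0 [lmax per_i0]] := IHi l.+1.
  move=> j le_ij lt_j; case: (eqVneq j i) => [-> // | neq_ji]; apply: per_i; lia.
by exists i0; [lia | split => //; move=> j le_j lt_j; apply: per_i0; lia].
Qed.

Lemma has_period_Tfactor i l p : Tfactor i l = Tfactor (i + p) l -> has_period i (l + p) p.
Proof.
move=> eqT j le_ij lt_j; have lt_ji : j - i < l by lia.
have := congr1 (fun w => nth 0 w (j - i)) eqT.
by rewrite !nth_Tfactor // -addnA addnCA subnKC // addnC.
Qed.

Lemma has_period_sub i l p i' l' : has_period i l p -> i <= i' -> i' + l' <= i + l ->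
  has_period i' l' p.
Proof. by move=> per_i le_i le_l j le_j lt_j; apply: per_i; lia. Qed.

Lemma Tfactor_shift i l p a b : has_period i l p -> i <= a -> a + b + p <= i + l ->
  Tfactor (a + p) b = Tfactor a b.
Proof.
move=> per_i le_ia le_ab.
apply: (@eq_from_nth _ 0) => [|x]; rewrite !size_Tfactor // => lt_x.
by rewrite !nth_Tfactor // addnAC; symmetry; apply: per_i; lia.
Qed.

(* Each position of the run is congruent modulo p to one of the window [b, b + p). *)
Lemma has_period_transfer a L p b q : has_period a L p -> a <= b < a + p ->
  b + p + q <= a + L -> has_period b (p + q) q -> has_period a L q.
Proof.
move=> per_p /andP[le_ab lt_b] le_bL per_q.
have above z : b <= z -> z + q < a + L -> T z = T (z + q).
  elim/ltn_ind: z => z IHz le_bz lt_z.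
  case: (ltnP z (b + p)) => [lt_zp | le_pz]; first by apply: per_q; lia.
  have -> : z = z - p + p by rewrite subnK //; lia.
  have step1 : T (z - p) = T (z - p + p) by apply: per_p; lia.
  have step2 : T (z - p + q) = T (z - p + q + p) by apply: per_p; lia.
  by rewrite -step1 addnAC -step2; apply: IHz; lia.
move=> z le_az lt_z; case: (leqP b z) => [le_bz | lt_zb]; first exact: above.
have step1 : T z = T (z + p) by apply: per_p; lia.
have step2 : T (z + q) = T (z + q + p) by apply: per_p; lia.
by rewrite step1 step2 addnAC; apply: above; lia.
Qed.

Lemma Tx_X k j : j < size (X k) -> T (Xpos k + j) = nth 0 (X k) j.
Proof. by move=> lt_j; rewrite -(nth_Tfactor _ lt_j) Tfactor_X. Qed.

Lemma X_has_period k : has_period (Xpos k) (size (X k)) (t k).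
Proof.
move=> z le_z lt_z; have -> : z = Xpos k + (z - Xpos k) by rewrite subnKC.
by rewrite -addnA !Tx_X ?(nth_X_period (n := z - Xpos k)) //; lia.
Qed.

Lemma run_head_a i l p : left_maximal i p -> has_period i l p -> p < l -> T i = 0.
Proof.
move=> lmax per_i lt_pl; case: (eqVneq (T i) 0) => // /eqP T_i.
have /Tx_neq0_pos[n' e_ip _] : T (i + p) <> 0 by rewrite -per_i //; lia.
have [n e_i _] := Tx_neq0_pos T_i.
case: lmax => [| []]; first by rewrite e_i.
have -> : i.-1 + p = (i + p).-1 by rewrite e_i.
by rewrite e_ip e_i /= !Tx_pos.
Qed.

Definition X_prefix_at k i l :=
  [/\ l <= size (X k), Xpos k <= i & Tfactor i l = take l (X k)].

Lemma period1_X_prefix i l : left_maximal i 1 -> has_period i l 1 -> 1 < l ->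
  X_prefix_at 0 i l.
Proof.
move=> lmax per_i lt1l; have T_i := run_head_a lmax per_i lt1l.
have T_i1 : T i.+1 = 0 by rewrite -addn1 -per_i //; lia.
have [n e_i] := Tx_eq0_pos T_i.
have T_n : T n = 2.
  case: (eqVneq (T n) 2) => // /eqP /posS_ab [_]; rewrite -e_i T_i1; lia.
have le_l2 : l <= 2.
  rewrite leqNgt; apply/negP => lt2l.
  have T_i2 : T i.+2 = 0 by rewrite -T_i1 (per_i i.+1) ?addn1 //; lia.
  have /posS_ab [_] : T n.+1 <> 2 by rewrite (Tx_c_next T_n).
  by rewrite posS_c // -e_i T_i2 (Tx_c_next T_n).
have le6i : 6 <= i.
  (* T begins with abacaba *)
  rewrite leqNgt; apply/negP => lt_i6; move: T_i T_i1.
  by case: i {lmax per_i e_i} lt_i6 => [|[|[|[|[|[|]]]]]] //; vm_compute.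
split=> //; have -> : l = 2 by lia.
by rewrite /Tfactor /= T_i T_i1.
Qed.

Section Desubstitution.

Variables (i p n p' : nat).
Hypotheses (i_pos : i = pos n) (ip_pos : i + p = pos (n + p')).

Lemma desub_left_maximal : left_maximal i p -> left_maximal n p'.
Proof.
case: (posnP n) => [-> | n_gt0] lmax; [by left | right => eqT].
have i_gt0 : 0 < i by rewrite i_pos -[0]/(pos 0) ltn_pos2.
case: lmax => [i0 | []]; first by rewrite i0 in i_gt0.
have -> : T i.-1 = (T n.-1).+1 %% 3 by rewrite i_pos -{1}(prednK n_gt0) Tx_posS_pred.
rewrite eqT -Tx_posS_pred -addSn prednK // -ip_pos; congr T; lia.
Qed.

Lemma desub_lt : 1 < p -> p' < p.
Proof.
move=> lt1p; rewrite ltnNge; apply/negP => le_pp'.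
have : pos (n + p) <= pos (n + p') by rewrite leq_pos2 leq_add2l.
have := leq_pos_addn n.+2 (p - 2); have := pos_addn2 n.
rewrite (_ : n.+2 + (p - 2) = n + p); lia.
Qed.

Section Run.

(* The letters x_(n+1), ..., x_(n+l') are those whose block, together with the letter
   following it, lies inside the run T[i+1, i+l]; they can be read off the run. *)

Variables (l l' : nat).
Hypotheses (per_i : has_period i l p)
  (inside : forall j, j < l' -> (pos (n + j)).+1 < i + l)
  (cover : i + l <= (pos (n + l')).+1).

Lemma desub_Tx_shift j : j + p' < l' -> pos (n + j + p') = pos (n + j) + p ->
  T (n + j) = T (n + j + p').
Proof.
move=> lt_j shift; apply: Tx_succ_mod3_inj; rewrite -!Tx_pos_succ shift -addSn.
apply: per_i; first by rewrite i_pos; apply/leqW; rewrite leq_pos2 leq_addr.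
by have := inside lt_j; rewrite addnA shift addSn.
Qed.

Lemma desub_pos_shift j : j + p' <= l' -> pos (n + j + p') = pos (n + j) + p.
Proof.
elim: j => [|j IHj] le_j; first by rewrite !addn0 -i_pos -ip_pos.
have lt_j : j + p' < l' by rewrite -addSn.
have T_eq := desub_Tx_shift lt_j (IHj (ltnW lt_j)).
by rewrite addnS addSn !posS -T_eq IHj ?(ltnW lt_j) // addnAC.
Qed.

Lemma desub_has_period : has_period n l' p'.
Proof.
move=> j le_nj lt_j; have lt : j - n + p' < l' by rewrite -(ltn_add2l n) addnA subnKC.
by have := desub_Tx_shift lt (desub_pos_shift (ltnW lt)); rewrite subnKC.
Qed.

Lemma desub_long : 1 < p -> 3 * p <= l + 1 -> 3 * p' <= l' + 1.
Proof.
move=> lt1p long; rewrite leqNgt; apply/negP => short.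
case: (leqP l' p') => [le_l' | lt_pl'].
  have : pos (n + l') <= pos (n + p') by rewrite leq_pos2 leq_add2l.
  lia.
have shift1 : pos (n + l') = pos (n + (l' - p')) + p.
  by rewrite -desub_pos_shift; [congr pos | ]; lia.
case: (ltnP l' (2 * p')) => [lt_l' | le_l'].
  have : pos (n + (l' - p')) < pos (n + p') by rewrite ltn_pos2 ltn_add2l; lia.
  lia.
have shift2 : pos (n + (l' - p')) = pos (n + (l' - 2 * p')) + p.
  by rewrite -desub_pos_shift; [congr pos | ]; lia.
have : pos (n + (l' - 2 * p')) <= pos (n + (p' - 2)) by rewrite leq_pos2 leq_add2l; lia.
have := pos_addn2 (n + (p' - 2)); rewrite (_ : (n + (p' - 2)).+2 = n + p'); lia.
Qed.

Lemma desub_X_prefix k : 0 < p' -> 3 * p' <= l' + 1 -> p' = t k ->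
  X_prefix_at k n l' -> p = t k.+1 /\ X_prefix_at k.+1 i l.
Proof.
move=> p'_gt0 long' e_p' [le_l' le_Xpos TX].
have Tn_p' : Tfactor n p' = A k.
  rewrite -(take_X k) -e_p' -(@take_Tfactor n p' l'); last lia.
  by rewrite TX take_takel //; lia.
split.
  by apply/eqP; rewrite -(eqn_add2l i) ip_pos pos_addn -i_pos Tn_p' -sigma_pow_aS.
set D := size (sigma (Tfactor n l')).
have TD : Tfactor i D.+1 = take D.+1 (X k.+1).
  rewrite /D {2}TX take_X_succ -addn1 Tfactor_cat i_pos Tfactor_sigma -pos_addn -TX.
  by rewrite /Tfactor /= Tx_pos.
have le_lD : l <= D.+1 by move: cover; rewrite pos_addn -i_pos /D; lia.
split.
- apply: leq_trans le_lD _; rewrite /= size_cat addn1 ltnS /D TX.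
  by rewrite -{2}(cat_take_drop l' (X k)) sigma_cat size_cat leq_addr.
- by rewrite -Xpos_pos i_pos leq_pos2.
- by rewrite -(take_Tfactor i le_lD) TD take_takel.
Qed.

End Run.

End Desubstitution.

Theorem long_run_X_prefix p i l : 0 < p -> left_maximal i p -> has_period i l p ->
  3 * p <= l + 1 -> exists2 k, p = t k & X_prefix_at k i l.
Proof.
elim/ltn_ind: p i l => p IHp i l p_gt0 lmax per_i long.
case: (ltngtP p 1) => [| lt1p | p1]; first lia; last first.
  by subst p; exists 0 => //; apply: period1_X_prefix => //; lia.
have T_i : T i = 0 by apply: run_head_a lmax per_i _; lia.
have [n i_pos] := Tx_eq0_pos T_i.
have /Tx_eq0_pos [m ip_pos] : T (i + p) = 0 by rewrite -per_i //; lia.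
have lt_nm : n < m by rewrite -ltn_pos2 -i_pos -ip_pos; lia.
set p' := m - n; have ip_pos' : i + p = pos (n + p') by rewrite subnKC // ltnW.
have ex_l0 : exists l0, i + l <= (pos (n + l0)).+1.
  by exists l; have := leq_pos_addn n l; lia.
case: (ex_minnP ex_l0) => l0 cover min_l0.
have inside j : j < l0 -> (pos (n + j)).+1 < i + l.
  by move=> lt_j; rewrite ltnNge; apply/negP => /min_l0; lia.
have p'_gt0 : 0 < p' by rewrite subn_gt0.
have long' := desub_long i_pos ip_pos' per_i inside cover lt1p long.
have lmax' := desub_left_maximal i_pos ip_pos' lmax.
have per_n := desub_has_period i_pos ip_pos' per_i inside.
have [k e_p' Xk] := IHp p' (desub_lt i_pos ip_pos' lt1p) n l0 p'_gt0 lmax' per_n long'.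
have [e_p XSk] := desub_X_prefix i_pos ip_pos' cover p'_gt0 long' e_p' Xk.
by exists k.+1.
Qed.

Lemma X_min_period k d : 0 < d -> 3 * d <= size (X k) + 1 ->
  has_period (Xpos k) (size (X k)) d -> t k <= d.
Proof.
move=> d_gt0 long per; have [i0 _ [lmax per_i0]] := has_period_extend_left per.
have [|k' -> [le_X _ _]] := long_run_X_prefix d_gt0 lmax per_i0; first lia.
by rewrite leq_trib2 -leq_size_X2; lia.
Qed.

(** * Cubes *)

Lemma Tfactor_cube i p : has_period i (3 * p) p ->
  Tfactor i (3 * p) = Tfactor i p ++ Tfactor i p ++ Tfactor i p.
Proof.
move=> per_i; rewrite (_ : 3 * p = p + (p + p)); last lia.
by rewrite !Tfactor_cat !(Tfactor_shift per_i) //; lia.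
Qed.

Lemma cube_has_period i w : Tfactor i (3 * size w) = w ++ w ++ w ->
  has_period i (3 * size w) (size w).
Proof.
set p := size w => Tw; rewrite (_ : 3 * p = 2 * p + p); last lia.
apply: has_period_Tfactor.
have -> : Tfactor i (2 * p) = w ++ w.
  by rewrite -(@take_Tfactor i (2 * p) (3 * p)) ?Tw ?catA ?take_size_cat ?size_cat //; lia.
have := Tfactor_cat i p (2 * p); rewrite (_ : p + 2 * p = 3 * p) ?Tw; last lia.
by move/(congr1 (drop p)); rewrite !drop_size_cat ?size_Tfactor // => ->.
Qed.

Lemma infix_drop (E : eqType) (u v : seq E) : infix u v ->
  exists2 i, i + size u <= size v & take (size u) (drop i v) = u.
Proof.
case/infixP => s1 [s2 ->]; exists (size s1); last by rewrite drop_size_cat // take_size_cat.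
by rewrite !size_cat leq_add2l leq_addr.
Qed.

Lemma infix_cube_Tfactor m (w : seq nat) : infix (w ++ w ++ w) (A m) ->
  exists2 i, i + 3 * size w <= t m & Tfactor i (3 * size w) = w ++ w ++ w.
Proof.
have -> : 3 * size w = size (w ++ w ++ w) by rewrite !size_cat; lia.
case/infix_drop => i le_i Tw; exists i => //.
by rewrite -[i]add0n -(take_drop_Tfactor 0 (l := t m) le_i) -TprefixE Tprefix_trib.
Qed.

Lemma mem_factors u w : w != [::] -> infix w u -> w \in factors u.
Proof.
move=> w_neq0 /infixP [s1 [s2 ->]]; have w_gt0 : 0 < @size nat w by rewrite lt0n size_eq0.
apply/allpairsP; exists (size s1, size w) => /=.
rewrite drop_size_cat // take_size_cat // !size_cat; split => //.
  by rewrite mem_iota add0n -[X in X < _]addn0 ltn_add2l addn_gt0 w_gt0.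
by rewrite inE mem_iota w_gt0 add1n ltnS addnCA leq_addr orbT.
Qed.

Definition cube_root k j := take (t k) (drop j (X k)).

Definition slack k := size (X k) - 3 * t k.

Lemma Tfactor_cube_root k j : j + t k <= size (X k) ->
  Tfactor (Xpos k + j) (t k) = cube_root k j.
Proof. by move=> le_j; rewrite -(take_drop_Tfactor _ le_j) Tfactor_X. Qed.

Lemma size_cube_root k j : j + t k <= size (X k) -> size (cube_root k j) = t k.
Proof. by move=> le_j; rewrite -Tfactor_cube_root // size_Tfactor. Qed.

Lemma cube_root_cube m k j : 3 <= k -> k + 4 <= m -> j <= slack k ->
  cube_root k j != [::] /\ infix (cube_root k j ++ cube_root k j ++ cube_root k j) (A m).
Proof.
move=> le3k le_km le_j; have [ge3 _ le_end] := size_X_bounds le3k.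
have le_j3 : j + 3 * t k <= size (X k) by move: le_j; rewrite /slack; lia.
rewrite -Tfactor_cube_root; last lia.
split; first by rewrite -size_eq0 size_Tfactor -lt0n trib_gt0.
set a := Xpos k + j.
have le_am : a + 3 * t k <= t m.
  have : t k.+4 <= t m by rewrite leq_trib2; lia.
  by rewrite /a; lia.
rewrite -Tfactor_cube; last by apply: (has_period_sub (@X_has_period k)); rewrite /a; lia.
rewrite -Tprefix_trib TprefixE (_ : t m = a + (3 * t k + (t m - (a + 3 * t k)))); last lia.
by rewrite !Tfactor_cat add0n infix_infix.
Qed.

Lemma cube_root_of_cube m (w : seq nat) : w != [::] -> infix (w ++ w ++ w) (A m) ->
  exists k j, [/\ 3 <= k, k + 4 <= m, j <= slack k & w = cube_root k j].
Proof.
move=> w_neq0 /infix_cube_Tfactor [i le_i Tw].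
have w_gt0 : 0 < size w by rewrite lt0n size_eq0.
have [i0 le_i0 [lmax per_i0]] := has_period_extend_left (cube_has_period Tw).
have [|k e_w [le_X le_Xpos TX]] := long_run_X_prefix w_gt0 lmax per_i0; first lia.
move: le_X TX; set j := i - i0 => le_X TX.
have le3k : 3 <= k.
  by rewrite leqNgt; apply/negP => lt_k3; have := size_X_small (_ : k <= 2); lia.
exists k, j; split => //.
- have le_t3 : t k <= t k.+3 by rewrite leq_trib2 -addn3 leq_addr.
  have : t k.+3 < t m by move: le_Xpos; rewrite /Xpos; have := trib_gt0 k; lia.
  by rewrite ltn_trib2; lia.
- by rewrite /slack; lia.
have -> : w = Tfactor i (size w).
  by rewrite -(@take_Tfactor i (size w) (3 * size w)) ?Tw ?take_size_cat //; lia.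
rewrite -{1}(subnKC le_i0) -(take_drop_Tfactor i0 (l := 3 * size w + j)); last lia.
by rewrite TX /cube_root -e_w -take_drop take_takel //; lia.
Qed.

Lemma cube_root_inj k : 3 <= k -> {in [pred j | j <= slack k] &, injective (cube_root k)}.
Proof.
move=> le3k j j'; rewrite !inE => le_j le_j' eq_r.
wlog lt_jj' : j j' le_j le_j' eq_r / j < j'.
  by move=> wlog; case: (ltngtP j j') => // lt; [apply: wlog | symmetry; apply: wlog].
have [ge3 lt4 _] := size_X_bounds le3k; move: le_j'; rewrite /slack => le_j'.
have window : has_period (Xpos k + j) (t k + (j' - j)) (j' - j).
  apply: has_period_Tfactor; rewrite -addnA (subnKC (ltnW lt_jj')).
  by rewrite !Tfactor_cube_root ?eq_r //; lia.
have per : has_period (Xpos k) (size (X k)) (j' - j).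
  by apply: has_period_transfer (@X_has_period k) _ _ window; rewrite ?addnA; lia.
suff : t k <= j' - j by lia.
by apply: X_min_period per; lia.
Qed.

(* 3 <= k <= m - 4 and j <= slack k *)
Definition cube_roots m :=
  [seq cube_root k j | k <- iota 3 (m - 6), j <- iota 0 (slack k).+1].

Lemma mem_cube_roots m w :
  (w \in cube_roots m) = (w != [::]) && infix (w ++ w ++ w) (A m).
Proof.
apply/allpairsPdep/andP => [[k [j [k_in j_in ->]]] | [w_neq0 cube]].
  by apply: cube_root_cube; move: k_in j_in; rewrite !mem_iota; lia.
have [k [j [le3k le_km le_j ->]]] := cube_root_of_cube w_neq0 cube.
by exists k, j; rewrite !mem_iota; split => //; lia.
Qed.

Lemma uniq_cube_roots m : uniq (cube_roots m).
Proof.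
apply: allpairs_uniq_dep => [|k _|]; rewrite ?iota_uniq //.
move=> _ _ /allpairsPdep [k [j [k_in j_in ->]]] /allpairsPdep [k' [j' [k'_in j'_in ->]]].
move=> /= eq_r; move: k_in j_in k'_in j'_in; rewrite !mem_iota => k_in j_in k'_in j'_in.
have /size_X_bounds [ge3 _ _] : 3 <= k by lia.
have /size_X_bounds [ge3' _ _] : 3 <= k' by lia.
have [fit fit'] : j + t k <= size (X k) /\ j' + t k' <= size (X k').
  by move: j_in j'_in; rewrite /slack; lia.
have e_k : k = k'.
  by apply: (incn_inj leq_trib2); rewrite -(size_cube_root fit) eq_r size_cube_root.
subst k'; have -> // : j = j'.
by apply: (cube_root_inj _ _ _ eq_r); rewrite ?inE; lia.
Qed.

Lemma cube_count_trib m : cube_count (t m) = sumn [seq (slack k).+1 | k <- iota 3 (m - 6)].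
Proof.
rewrite /cube_count Tprefix_trib.
rewrite (perm_size (uniq_perm (undup_uniq _) (uniq_cube_roots m) _)).
  by rewrite size_allpairs_dep; congr sumn; apply: eq_map => k; rewrite size_iota.
move=> w; rewrite mem_undup mem_filter mem_cube_roots andb_idr // => /andP[w_neq0 cube].
exact/mem_factors/(infix_trans (infix_infix [::] w (w ++ w)))/cube.
Qed.

Lemma sum_slack n :
  2 * sumn [seq (slack k).+1 | k <- iota 3 n.+1] + n + 4 = t n.+2 + t n.+1.
Proof.
elim: n => [|n IHn]; first by vm_compute.
have -> : iota 3 n.+2 = iota 3 n.+1 ++ [:: n.+4] by rewrite -[n.+2]addn1 iotaD addn1.
have /size_X_bounds [ge3 _ _] : 3 <= n.+4 by [].
move: IHn; rewrite map_cat sumn_cat; set S := sumn _ => IHn /=.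
by have := size_X_trib n.+1; have := trib_rec n.+1; rewrite /slack; lia.
Qed.

Local Open Scope ring_scope.

Theorem theorem5p2 :
  (forall m : nat, (m <= 6)%N -> cube_count (trib m) = 0%N) /\
  (forall m : nat, (7 <= m)%N ->
     2%:Z * (cube_count (trib m))%:Z
       = (trib (m - 5))%:Z + (trib (m - 6))%:Z - m%:Z + 3%:Z).
Proof.
split => m le_m; rewrite cube_count_trib.
  by rewrite (_ : m - 6 = 0)%N //; lia.
have := sum_slack (m - 7).
rewrite (_ : (m - 7).+2 = m - 5)%N; last lia.
rewrite (_ : (m - 7).+1 = m - 6)%N; last lia.
lia.
Qed.
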